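(* (1) For every $\gamma\in(0,1]$ there exists $c_*=c_*(\gamma)>0$ such that $\lambda_{n,\gamma}\ge c_*n^{2/(1+\gamma)}$ for all $n\in\mathbb{N}^*$. (2) For every $\gamma>0$ there exists $c^*=c^*(\gamma)>0$ such that $\lambda_{n,\gamma}\le c^*n^{2/(1+\gamma)}$ for all $n\in\mathbb{N}^*$.
   Context: For $n\in\mathbb{N}^*$ and $\gamma>0$, $\lambda_{n,\gamma}$ is the smallest eigenvalue of the operator $A_{n,\gamma}\varphi=-\varphi''+(n\pi)^2|x|^{2\gamma}\varphi$ with domain $H^2(-1,1)\cap H^1_0(-1,1)$, i.e. $\lambda_{n,\gamma}=\min\big\{\int_{-1}^1[v'^2+(n\pi)^2|x|^{2\gamma}v^2]dx/\int_{-1}^1v^2dx:\ v\in H^1_0(-1,1)\setminus\{0\}\big\}$. *)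

From Stdlib Require Import Reals Lra ClassicalEpsilon.
Open Scope R_scope.

(* |x|^(2 gamma), with the convention 0^(2 gamma) = 0 (Rpower 0 y = 1 in Stdlib). *)
Definition abs_pow2 (g x : R) : R :=
  if Req_dec_T x 0 then 0 else Rpower (Rabs x) (2 * g).

(* Test functions: C^1 on [-1,1] (v' is the derivative of v and is continuous there),
   vanishing at -1 and 1, and not identically zero on [-1,1].
   These are dense in H^1_0(-1,1). *)
Definition admissible (v v' : R -> R) : Prop :=
  (forall x, -1 <= x <= 1 -> derivable_pt_lim v x (v' x)) /\
  (forall x, -1 <= x <= 1 -> continuity_pt v' x) /\
  v (-1) = 0 /\ v 1 = 0 /\
  (exists x, -1 <= x <= 1 /\ v x <> 0).

Definition rayleigh_value (n : nat) (g : R) (v v' : R -> R) (q : R) : Prop :=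
  exists (p1 : Riemann_integrable
                 (fun x => v' x ^ 2 + (INR n * PI) ^ 2 * abs_pow2 g x * v x ^ 2) (-1) 1)
         (p2 : Riemann_integrable (fun x => v x ^ 2) (-1) 1),
    q = RiemannInt p1 / RiemannInt p2.

Definition rayleigh_set (n : nat) (g : R) (q : R) : Prop :=
  exists v v', admissible v v' /\ rayleigh_value n g v v' q.

Definition is_glb (E : R -> Prop) (l : R) : Prop :=
  (forall x, E x -> l <= x) /\ (forall b, (forall x, E x -> b <= x) -> b <= l).

(* lambda_{n,gamma}: the minimum (= infimum) of the Rayleigh quotient. *)
Definition lambda (n : nat) (g : R) : R :=
  epsilon (inhabits 0) (fun l => is_glb (rayleigh_set n g) l).

From Stdlib Require Import Reals Lra Psatz ClassicalEpsilon.
From Coquelicot Require Import Coquelicot.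
Open Scope R_scope.

(* Both bounds live at the length scale h = n^(-1/(1+g)), where n^2 h^(2g) = h^(-2).
   Lower bound: for the multiplier phi(x) = h atan(x/h), integrating (phi v^2)' over
   [-1,1] gives int (phi' v^2 + 2 phi v v') = 0.  Since phi' >= 1/2 on |x| <= h, the
   potential (n pi)^2 |x|^(2g) exceeds pi^2 h^(-2) on |x| >= h, and |phi| <= pi h / 2,
   absorbing the cross term yields int v^2 <= 4 pi^2 h^2 int (v'^2 + (n pi)^2 |x|^(2g) v^2),
   for every g > 0.
   Upper bound: the test function ((h^2 - x^2)_+)^2 has Rayleigh quotient at most
   315/128 (16 h^(-2) + (n pi)^2 h^(2g)). *)

Lemma Rpower_pos a b : 0 < Rpower a b.
Proof. apply exp_pos. Qed.

Lemma continuity_pt_pow2 (f : R -> R) x :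
  continuity_pt f x -> continuity_pt (fun y => f y ^ 2) x.
Proof.
  intro Hf. apply (continuity_pt_comp f (fun t => t ^ 2)); [exact Hf |].
  apply derivable_continuous_pt, derivable_pt_pow.
Qed.

Lemma RInt_gt_0_of_pt (f : R -> R) (a b x0 : R) :
  a < b -> a <= x0 <= b ->
  (forall x, a <= x <= b -> continuous f x) ->
  (forall x, a <= x <= b -> 0 <= f x) ->
  0 < f x0 -> 0 < RInt f a b.
Proof.
  intros Hab Hx0 Hc Hpos Hfx0.
  destruct (proj1 (filterlim_locally f (f x0)) (Hc x0 Hx0)
              (mkposreal _ (Rdiv_lt_0_compat _ 2 Hfx0 Rlt_0_2))) as [d Hd].
  set (c := Rmax a (x0 - d / 2)). set (e := Rmin b (x0 + d / 2)).
  pose proof (cond_pos d).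
  assert (Hc1 : a <= c <= x0) by (unfold c, Rmax; destruct Rle_dec; lra).
  assert (He1 : x0 <= e <= b) by (unfold e, Rmin; destruct Rle_dec; lra).
  assert (Hce : c < e) by (unfold c, e, Rmax, Rmin; do 2 destruct Rle_dec; lra).
  assert (Hex : forall p q, a <= p -> p <= q -> q <= b -> ex_RInt f p q).
  { intros p q Hp Hpq Hq. apply (ex_RInt_continuous (V := R_CompleteNormedModule)).
    intros z Hz. apply Hc.
    rewrite Rmin_left, Rmax_right in Hz; lra. }
  rewrite <- (RInt_Chasles f a c b), <- (RInt_Chasles f c e b) by (apply Hex; lra).
  assert (0 <= RInt f a c) by (apply RInt_ge_0; [lra | apply Hex; lra | intros; apply Hpos; lra]).
  assert (0 <= RInt f e b) by (apply RInt_ge_0; [lra | apply Hex; lra | intros; apply Hpos; lra]).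
  assert (0 < RInt f c e).
  { apply RInt_gt_0; [exact Hce | | intros; apply Hc; lra].
    intros x Hx. assert (Hball : ball x0 d x).
    { change (Rabs (x - x0) < d). apply Rabs_def1; unfold c, e, Rmax, Rmin in Hx;
      revert Hx; do 2 destruct Rle_dec; lra. }
    specialize (Hd x Hball). change (Rabs (f x - f x0) < f x0 / 2) in Hd.
    apply Rabs_def2 in Hd. lra. }
  change plus with Rplus. lra.
Qed.

Lemma is_glb_exists (E : R -> Prop) :
  (exists q, E q) -> (exists m, forall q, E q -> m <= q) -> exists l, is_glb E l.
Proof.
  intros [q0 Hq0] [m Hm].
  destruct (completeness (fun x => E (- x))) as [s [Hub Hleast]].
  - exists (- m). intros x Hx. specialize (Hm _ Hx). lra.
  - exists (- q0). rewrite Ropp_involutive. exact Hq0.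
  - exists (- s). split.
    + intros x Hx. assert (- x <= s); [| lra]. apply Hub. rewrite Ropp_involutive. exact Hx.
    + intros b Hb. assert (s <= - b); [| lra]. apply Hleast. intros x Hx.
      specialize (Hb _ Hx). lra.
Qed.

Lemma abs_pow2_nonneg g x : 0 <= abs_pow2 g x.
Proof. unfold abs_pow2. destruct Req_dec_T; [lra | left; apply Rpower_pos]. Qed.

Lemma abs_pow2_le g h x : 0 <= g -> Rabs x <= h -> abs_pow2 g x <= Rpower h (2 * g).
Proof.
  intros Hg Hx. unfold abs_pow2. destruct Req_dec_T as [_ | Hx0]; [left; apply Rpower_pos |].
  apply Rle_Rpower_l; [lra | split; [apply Rabs_pos_lt |]; assumption].
Qed.

Lemma abs_pow2_ge g h x : 0 <= g -> 0 < h <= Rabs x -> Rpower h (2 * g) <= abs_pow2 g x.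
Proof.
  intros Hg Hx. unfold abs_pow2. destruct Req_dec_T as [-> | _].
  - rewrite Rabs_R0 in Hx. lra.
  - apply Rle_Rpower_l; lra.
Qed.

Lemma continuity_pt_abs_pow2 g x : 0 < g -> continuity_pt (abs_pow2 g) x.
Proof.
  intro Hg. destruct (Req_dec x 0) as [-> | Hx].
  - intros eps Heps. exists (Rpower eps (/ (2 * g))). split; [apply Rpower_pos |].
    intros y [[_ Hy0] Hy]. simpl in *. unfold R_dist in *. rewrite Rminus_0_r in Hy.
    unfold abs_pow2 at 2. destruct Req_dec_T as [_ | []]; [| reflexivity].
    rewrite Rminus_0_r, Rabs_right by apply Rle_ge, abs_pow2_nonneg.
    unfold abs_pow2. destruct Req_dec_T as [| _]; [congruence |].
    replace eps with (Rpower (Rpower eps (/ (2 * g))) (2 * g))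
      by (rewrite Rpower_mult, Rinv_l, Rpower_1; lra).
    apply Rlt_Rpower_l; [lra | split; [apply Rabs_pos_lt |]; auto].
  - apply continuity_pt_filterlim.
    apply (continuous_ext_loc _ (fun y => Rpower (Rabs y) (2 * g))).
    + apply (filter_imp (fun y => y <> 0)); [| exact (open_neq 0 x Hx)].
      intros y Hy. unfold abs_pow2. destruct Req_dec_T; [contradiction | reflexivity].
    + apply continuity_pt_filterlim, (continuity_pt_comp Rabs (fun t => Rpower t (2 * g))).
      * apply Rcontinuity_abs.
      * apply derivable_continuous_pt. eexists. apply derivable_pt_lim_power, Rabs_pos_lt, Hx.
Qed.

Section Multiplier.
Variables v v' phi dphi : R -> R.
Hypotheses
  (Hv : forall x, -1 <= x <= 1 -> derivable_pt_lim v x (v' x))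
  (Hv' : forall x, -1 <= x <= 1 -> continuity_pt v' x)
  (Hv_m1 : v (-1) = 0) (Hv_1 : v 1 = 0)
  (Hphi : forall x, -1 <= x <= 1 -> derivable_pt_lim phi x (dphi x))
  (Hdphi : forall x, -1 <= x <= 1 -> continuity_pt dphi x).

Lemma is_RInt_multiplier :
  is_RInt (fun x => dphi x * v x ^ 2 + 2 * phi x * v x * v' x) (-1) 1 0.
Proof.
  replace 0 with (minus (phi 1 * v 1 ^ 2) (phi (-1) * v (-1) ^ 2))
    by (rewrite Hv_m1, Hv_1; unfold minus, plus, opp; simpl; ring).
  apply (is_RInt_derive (V := R_CompleteNormedModule) (fun x => phi x * v x ^ 2));
    rewrite Rmin_left, Rmax_right by lra; intros x Hx.
  - apply is_derive_Reals.
    replace (dphi x * v x ^ 2 + 2 * phi x * v x * v' x)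
      with (dphi x * v x ^ 2 + phi x * (INR 2 * v x ^ Nat.pred 2 * v' x)) by (simpl; ring).
    apply (derivable_pt_lim_mult phi (fun y => v y ^ 2)); [apply Hphi, Hx |].
    apply (derivable_pt_lim_comp v (fun t => t ^ 2)); [apply Hv, Hx | apply derivable_pt_lim_pow].
  - assert (continuity_pt v x) by (apply derivable_continuous_pt; eexists; apply Hv, Hx).
    assert (continuity_pt phi x) by (apply derivable_continuous_pt; eexists; apply Hphi, Hx).
    apply continuity_pt_filterlim.
    repeat first [ apply continuity_pt_plus | apply continuity_pt_mult | apply continuity_pt_pow2
                 | apply continuity_pt_const; intros ? ?; reflexivity | auto ].
Qed.

Lemma multiplier_estimate (W : R -> R) (K : R) :
  (forall x, -1 <= x <= 1 -> 1 <= 2 * dphi x + K * W x) ->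
  (forall x, -1 <= x <= 1 -> 8 * phi x ^ 2 <= K) ->
  ex_RInt (fun x => v' x ^ 2 + W x * v x ^ 2) (-1) 1 ->
  RInt (fun x => v x ^ 2) (-1) 1 <= 2 * K * RInt (fun x => v' x ^ 2 + W x * v x ^ 2) (-1) 1.
Proof.
  intros HW Hphi_le HF.
  set (F := fun x => v' x ^ 2 + W x * v x ^ 2) in *. set (G := fun x => v x ^ 2).
  assert (HG : ex_RInt G (-1) 1).
  { apply (ex_RInt_continuous (V := R_CompleteNormedModule)).
    rewrite Rmin_left, Rmax_right by lra. intros x Hx.
    apply continuity_pt_filterlim, continuity_pt_pow2, derivable_continuous_pt.
    eexists; apply Hv, Hx. }
  assert (Hsum : is_RInt
                   (fun x => 2 * (dphi x * v x ^ 2 + 2 * phi x * v x * v' x) + / 2 * G x + K * F x)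
                   (-1) 1 (2 * 0 + / 2 * RInt G (-1) 1 + K * RInt F (-1) 1)).
  { pose proof (is_RInt_scal _ _ _ 2 _ is_RInt_multiplier) as H1.
    pose proof (is_RInt_scal _ _ _ (/ 2) _ (RInt_correct _ _ _ HG)) as H2.
    pose proof (is_RInt_scal _ _ _ K _ (RInt_correct _ _ _ HF)) as H3.
    exact (is_RInt_plus _ _ _ _ _ _ (is_RInt_plus _ _ _ _ _ _ H1 H2) H3). }
  assert (Hle : RInt G (-1) 1 <= 2 * 0 + / 2 * RInt G (-1) 1 + K * RInt F (-1) 1).
  { rewrite <- (is_RInt_unique _ _ _ _ Hsum).
    apply RInt_le; [lra | exact HG | eexists; exact Hsum |].
    intros x Hx. specialize (HW x ltac:(lra)). specialize (Hphi_le x ltac:(lra)). unfold F, G.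
    (* the cross term 4 phi v v' is absorbed by v^2/2 + K v'^2 since K >= 8 phi^2 *)
    assert (0 <= (2 * dphi x + K * W x - 1) * v x ^ 2)
      by (apply Rmult_le_pos; [lra | apply pow2_ge_0]).
    assert (0 <= (K - 8 * phi x ^ 2) * v' x ^ 2) by (apply Rmult_le_pos; [lra | apply pow2_ge_0]).
    assert (0 <= (v x + 4 * phi x * v' x) ^ 2) by apply pow2_ge_0.
    nra. }
  lra.
Qed.

End Multiplier.

Lemma RInt_sq_pos v v' : admissible v v' -> 0 < RInt (fun x => v x ^ 2) (-1) 1.
Proof.
  intros (Hv & _ & _ & _ & x0 & Hx0 & Hvx0).
  apply (RInt_gt_0_of_pt _ _ _ x0);
    [lra | exact Hx0 | | intros; apply pow2_ge_0 | apply pow2_gt_0, Hvx0].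
  intros x Hx. apply continuity_pt_filterlim, continuity_pt_pow2, derivable_continuous_pt.
  eexists; apply Hv, Hx.
Qed.

Lemma derivable_pt_lim_scaled_atan h x :
  h <> 0 -> derivable_pt_lim (fun y => h * atan (y / h)) x (/ (1 + (x / h) ^ 2)).
Proof.
  intro Hh.
  assert (Hpos : 0 < 1 + (x / h) ^ 2) by (pose proof (pow2_ge_0 (x / h)); lra).
  replace (/ (1 + (x / h) ^ 2)) with (h * (/ (1 + (x / h) ^ 2) * / h))
    by (field; pose proof (pow2_ge_0 x); pose proof (pow2_gt_0 h Hh); split; [exact Hh | lra]).
  apply (derivable_pt_lim_scal (fun y => atan (y / h))).
  apply (derivable_pt_lim_comp (fun y => y / h) atan); [| apply derivable_pt_lim_atan].
  apply is_derive_Reals. auto_derive; [auto | field; exact Hh].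
Qed.

Lemma continuity_pt_scaled_atan_deriv h x :
  h <> 0 -> continuity_pt (fun y => / (1 + (y / h) ^ 2)) x.
Proof.
  intro Hh. apply derivable_continuous_pt. eexists. apply is_derive_Reals.
  auto_derive; [pose proof (pow2_ge_0 (x / h)); lra | reflexivity].
Qed.

Lemma atan_sq_le x : atan x ^ 2 <= (PI / 2) ^ 2.
Proof. pose proof (atan_bound x). pose proof PI_RGT_0. nra. Qed.

Lemma atan_multiplier_coercive g h c x :
  0 <= g -> 0 < h -> 1 <= c * Rpower h (2 * g) ->
  1 <= 2 * / (1 + (x / h) ^ 2) + c * abs_pow2 g x.
Proof.
  intros Hg Hh Hc.
  assert (Hc0 : 0 <= c).
  { destruct (Rle_lt_dec 0 c) as [| Hneg]; [assumption |].
    pose proof (Rpower_pos h (2 * g)). nra. }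
  pose proof (abs_pow2_nonneg g x) as Hw.
  destruct (Rle_lt_dec (Rabs x) h) as [Hx | Hx].
  - assert (Hxh : (x / h) ^ 2 <= 1).
    { assert (x ^ 2 <= h ^ 2) by (rewrite <- (pow2_abs x); pose proof (Rabs_pos x); nra).
      replace ((x / h) ^ 2) with (x ^ 2 / h ^ 2) by (field; lra).
      apply (Rdiv_le_1 (x ^ 2) (h ^ 2)); nra. }
    assert (/ 2 <= / (1 + (x / h) ^ 2))
      by (apply Rinv_le_contravar; [pose proof (pow2_ge_0 (x / h)) |]; lra).
    pose proof (Rmult_le_pos _ _ Hc0 Hw). lra.
  - pose proof (Rinv_0_lt_compat (1 + (x / h) ^ 2) ltac:(pose proof (pow2_ge_0 (x / h)); lra)).
    pose proof (Rmult_le_compat_l _ _ _ Hc0 (abs_pow2_ge g h x Hg ltac:(lra))). lra.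
Qed.

Definition length_scale (n : nat) (g : R) : R := Rpower (INR n) (- / (1 + g)).

Lemma length_scale_pos n g : 0 < length_scale n g.
Proof. apply Rpower_pos. Qed.

Section LengthScale.
Variables (n : nat) (g : R).
Hypotheses (Hn : (1 <= n)%nat) (Hg : 0 < g).

Let n_pos : 0 < INR n.
Proof. apply lt_0_INR; lia. Qed.

Lemma length_scale_le_1 : length_scale n g <= 1.
Proof.
  rewrite <- (Rpower_O (INR n) n_pos). apply Rle_Rpower.
  - apply (le_INR 1), Hn.
  - pose proof (Rinv_0_lt_compat (1 + g) ltac:(lra)). lra.
Qed.

Lemma inv_length_scale_sq : / length_scale n g ^ 2 = Rpower (INR n) (2 / (1 + g)).
Proof.
  rewrite <- (Rpower_pow 2 _ (length_scale_pos n g)). unfold length_scale. rewrite Rpower_mult.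
  replace (- / (1 + g) * INR 2) with (- (2 / (1 + g))) by (simpl; field; lra).
  rewrite Rpower_Ropp. apply Rinv_inv.
Qed.

Lemma length_scale_weight :
  INR n ^ 2 * Rpower (length_scale n g) (2 * g) = Rpower (INR n) (2 / (1 + g)).
Proof.
  unfold length_scale. rewrite <- (Rpower_pow 2 _ n_pos), Rpower_mult, <- Rpower_plus.
  f_equal. simpl. field. lra.
Qed.

Lemma potential_at_length_scale :
  1 <= 2 * PI ^ 2 * length_scale n g ^ 2 * (INR n * PI) ^ 2 * Rpower (length_scale n g) (2 * g).
Proof.
  replace (2 * PI ^ 2 * length_scale n g ^ 2 * (INR n * PI) ^ 2 * Rpower (length_scale n g) (2 * g))
    with (2 * PI ^ 4 * (length_scale n g ^ 2 * (INR n ^ 2 * Rpower (length_scale n g) (2 * g))))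
    by ring.
  rewrite length_scale_weight, <- inv_length_scale_sq, Rinv_r
    by apply pow_nonzero, Rgt_not_eq, length_scale_pos.
  pose proof PI2_1. assert (1 <= PI ^ 2) by nra.
  replace (PI ^ 4) with (PI ^ 2 * PI ^ 2) by ring. nra.
Qed.

End LengthScale.

Lemma rayleigh_set_lower n g q :
  (1 <= n)%nat -> 0 < g -> rayleigh_set n g q ->
  / (4 * PI ^ 2) * Rpower (INR n) (2 / (1 + g)) <= q.
Proof.
  intros Hn Hg (v & v' & Hadm & p1 & p2 & ->).
  pose proof (RInt_sq_pos v v' Hadm) as Hden. rewrite <- !RInt_Reals.
  destruct Hadm as (Hv & Hv' & Hm1 & H1 & _).
  pose proof PI_RGT_0. pose proof (length_scale_pos n g) as Hh.
  set (h := length_scale n g) in *. set (K := 2 * PI ^ 2 * h ^ 2).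
  assert (Hcoer : forall x, 1 <= 2 * / (1 + (x / h) ^ 2) + K * ((INR n * PI) ^ 2 * abs_pow2 g x)).
  { intro x. rewrite <- Rmult_assoc.
    apply atan_multiplier_coercive; [lra | exact Hh |].
    apply potential_at_length_scale; assumption. }
  assert (Hbound : forall x, 8 * (h * atan (x / h)) ^ 2 <= K).
  { intro x. pose proof (atan_sq_le (x / h)). unfold K. rewrite Rpow_mult_distr. nra. }
  pose proof (multiplier_estimate v v' (fun y => h * atan (y / h)) (fun y => / (1 + (y / h) ^ 2))
    Hv Hv' Hm1 H1 (fun x _ => derivable_pt_lim_scaled_atan h x ltac:(lra))
    (fun x _ => continuity_pt_scaled_atan_deriv h x ltac:(lra))
    (fun x => (INR n * PI) ^ 2 * abs_pow2 g x) K (fun x _ => Hcoer x) (fun x _ => Hbound x)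
    (ex_RInt_Reals_1 _ _ _ p1)) as Hest.
  cbv beta in Hest.
  assert (HK : 0 < K) by (unfold K; pose proof (pow2_gt_0 PI); pose proof (pow2_gt_0 h); nra).
  replace (/ (4 * PI ^ 2) * Rpower (INR n) (2 / (1 + g))) with (/ (2 * K))
    by (rewrite <- (inv_length_scale_sq n g Hg); fold h; unfold K; field; split; lra).
  apply Rle_div_r; [exact Hden |].
  rewrite Rmult_comm. apply Rle_div_l; lra.
Qed.

Lemma continuity_pt_Rmax0 t : continuity_pt (Rmax 0) t.
Proof.
  apply continuity_pt_filterlim, (continuous_ext (fun s => / 2 * (s + Rabs s))).
  - intro s. change (/ 2 * (s + Rabs s) = Rmax 0 s). unfold Rmax. destruct Rle_dec.
    + rewrite Rabs_right by lra. field.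
    + rewrite Rabs_left by lra. field.
  - apply continuity_pt_filterlim, continuity_pt_mult;
      [apply continuity_pt_const; intros ? ?; reflexivity |].
    apply continuity_pt_plus; [apply continuity_pt_id | apply Rcontinuity_abs].
Qed.

Lemma derivable_pt_lim_Rmax0_sq t : derivable_pt_lim (fun s => Rmax 0 s ^ 2) t (2 * Rmax 0 t).
Proof.
  destruct (Rtotal_order t 0) as [Ht | [-> | Ht]];
    [apply is_derive_Reals | | apply is_derive_Reals].
  - rewrite Rmax_left by lra.
    apply (is_derive_ext_loc (fun _ => 0)); [| auto_derive; [auto | ring]].
    apply (filter_imp (fun s => s < 0)); [| exact (open_lt 0 t Ht)].
    intros s Hs. change (0 = Rmax 0 s ^ 2). rewrite Rmax_left by lra. ring.
  - rewrite Rmax_left by lra. intros eps Heps. exists (mkposreal eps Heps).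
    intros k Hk Hk'. simpl in Hk'. rewrite Rplus_0_l, (Rmax_left 0 0) by lra.
    destruct (Rle_dec 0 k).
    + rewrite Rmax_right by lra.
      replace ((k ^ 2 - 0 ^ 2) / k - 2 * 0) with k by (field; exact Hk). exact Hk'.
    + rewrite Rmax_left by lra.
      replace ((0 ^ 2 - 0 ^ 2) / k - 2 * 0) with 0 by (field; exact Hk).
      rewrite Rabs_R0. exact Heps.
  - rewrite Rmax_right by lra.
    apply (is_derive_ext_loc (fun s => s ^ 2)); [| auto_derive; [auto | ring]].
    apply (filter_imp (fun s => 0 < s)); [| exact (open_gt 0 t Ht)].
    intros s Hs. change (s ^ 2 = Rmax 0 s ^ 2). rewrite Rmax_right by lra. reflexivity.
Qed.

Definition bump (h x : R) : R := Rmax 0 (h ^ 2 - x ^ 2) ^ 2.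
Definition bump' (h x : R) : R := - 4 * x * Rmax 0 (h ^ 2 - x ^ 2).

Lemma derivable_pt_lim_bump h x : derivable_pt_lim (bump h) x (bump' h x).
Proof.
  unfold bump'.
  replace (- 4 * x * Rmax 0 (h ^ 2 - x ^ 2)) with (2 * Rmax 0 (h ^ 2 - x ^ 2) * (- 2 * x)) by ring.
  apply (derivable_pt_lim_comp (fun y => h ^ 2 - y ^ 2) (fun s => Rmax 0 s ^ 2));
    [| apply derivable_pt_lim_Rmax0_sq].
  apply is_derive_Reals. auto_derive; [auto | ring].
Qed.

Lemma continuity_pt_bump h x : continuity_pt (bump h) x.
Proof. apply derivable_continuous_pt. eexists. apply derivable_pt_lim_bump. Qed.

Lemma continuity_pt_bump' h x : continuity_pt (bump' h) x.
Proof.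
  unfold bump'. apply continuity_pt_mult.
  - apply continuity_pt_mult; [| apply continuity_pt_id].
    apply continuity_pt_const; intros ? ?; reflexivity.
  - apply (continuity_pt_comp (fun y => h ^ 2 - y ^ 2) (Rmax 0)); [| apply continuity_pt_Rmax0].
    apply derivable_continuous_pt. eexists. apply is_derive_Reals. auto_derive; auto.
Qed.

Lemma bump_outside h x : h ^ 2 <= x ^ 2 -> bump h x = 0 /\ bump' h x = 0.
Proof. intro Hx. unfold bump, bump'. rewrite Rmax_left by lra. split; ring. Qed.

Lemma bump_inside h x :
  x ^ 2 <= h ^ 2 -> bump h x = (h ^ 2 - x ^ 2) ^ 2 /\ bump' h x = - 4 * x * (h ^ 2 - x ^ 2).
Proof. intro Hx. unfold bump, bump'. rewrite Rmax_right by lra. split; reflexivity. Qed.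

Lemma RInt_supported (f : R -> R) h :
  0 < h <= 1 -> (forall a b, ex_RInt f a b) -> (forall x, h ^ 2 <= x ^ 2 -> f x = 0) ->
  RInt f (-1) 1 = RInt f (- h) h.
Proof.
  intros Hh Hf Hout.
  assert (Hzero : forall a b, a <= b -> h <= a \/ b <= - h -> RInt f a b = 0).
  { intros a b Hab Hhab. rewrite (RInt_ext _ (fun _ => 0)), RInt_const.
    - apply (scal_zero_r (V := R_ModuleSpace)).
    - intros x Hx. rewrite Rmin_left, Rmax_right in Hx by lra. apply Hout. nra. }
  rewrite <- (RInt_Chasles f (-1) (- h) 1), <- (RInt_Chasles f (- h) h 1) by apply Hf.
  rewrite (Hzero (-1) (- h)), (Hzero h 1) by lra.
  change (0 + (RInt f (- h) h + 0) = RInt f (- h) h). ring.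
Qed.

Lemma RInt_bump_sq h : 0 < h -> RInt (fun x => bump h x ^ 2) (- h) h = 256 * h ^ 9 / 315.
Proof.
  intro Hh.
  rewrite (RInt_ext _ (fun x => (h ^ 2 - x ^ 2) ^ 4)).
  2:{ intros x Hx. rewrite Rmin_left, Rmax_right in Hx by lra.
      rewrite (proj1 (bump_inside h x ltac:(nra))). simpl; ring. }
  set (P := fun x => h ^ 8 * x - 4 * h ^ 6 * x ^ 3 / 3 + 6 * h ^ 4 * x ^ 5 / 5
                     - 4 * h ^ 2 * x ^ 7 / 7 + x ^ 9 / 9).
  apply is_RInt_unique.
  replace (256 * h ^ 9 / 315) with (minus (P h) (P (- h)))
    by (change (P h - P (- h) = 256 * h ^ 9 / 315); unfold P; field).
  apply (is_RInt_derive (V := R_CompleteNormedModule) P); intros x _.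
  - unfold P. auto_derive; [auto |]. simpl; field.
  - apply continuity_pt_filterlim, derivable_continuous_pt. eexists. apply is_derive_Reals.
    auto_derive; auto.
Qed.

Lemma admissible_bump h : 0 < h <= 1 -> admissible (bump h) (bump' h).
Proof.
  intro Hh. repeat split.
  - intros x _. apply derivable_pt_lim_bump.
  - intros x _. apply continuity_pt_bump'.
  - apply bump_outside. nra.
  - apply bump_outside. nra.
  - exists 0. split; [lra |]. rewrite (proj1 (bump_inside h 0 ltac:(nra))).
    apply pow_nonzero. nra.
Qed.

Lemma bump_energy_le m g h x :
  0 <= m -> 0 <= g -> 0 < h -> x ^ 2 <= h ^ 2 ->
  bump' h x ^ 2 + m * abs_pow2 g x * bump h x ^ 2 <= 16 * h ^ 6 + m * Rpower h (2 * g) * h ^ 8.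
Proof.
  intros Hm Hg Hh Hx. destruct (bump_inside h x Hx) as [-> ->].
  assert (Hw : 0 <= abs_pow2 g x <= Rpower h (2 * g)).
  { split; [apply abs_pow2_nonneg | apply abs_pow2_le; [lra |]].
    rewrite <- (Rabs_pos_eq h) by lra. apply Rsqr_le_abs_0. unfold Rsqr. nra. }
  set (u := h ^ 2 - x ^ 2).
  assert (Hu : 0 <= u <= h ^ 2) by (unfold u; pose proof (pow2_ge_0 x); lra).
  assert (16 * x ^ 2 * u ^ 2 <= 16 * h ^ 6).
  { replace (16 * h ^ 6) with (16 * h ^ 2 * (h ^ 2) ^ 2) by ring.
    apply Rmult_le_compat; [nra | apply pow2_ge_0 | lra | apply pow_incr; lra]. }
  assert ((u ^ 2) ^ 2 <= h ^ 8)
    by (replace (h ^ 8) with (((h ^ 2) ^ 2) ^ 2) by ring;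
        apply pow_incr; split; [nra | apply pow_incr; lra]).
  assert (m * abs_pow2 g x * (u ^ 2) ^ 2 <= m * Rpower h (2 * g) * h ^ 8).
  { apply Rmult_le_compat; [nra | nra | apply Rmult_le_compat_l; lra | lra]. }
  replace ((- 4 * x * u) ^ 2) with (16 * x ^ 2 * u ^ 2) by ring. lra.
Qed.

Lemma bump_rayleigh_le n g h :
  0 < g -> 0 < h <= 1 ->
  exists q, rayleigh_set n g q /\
    q <= 315 / 128 * (16 / h ^ 2 + (INR n * PI) ^ 2 * Rpower h (2 * g)).
Proof.
  intros Hg Hh.
  set (m := (INR n * PI) ^ 2). assert (Hm : 0 <= m) by apply pow2_ge_0.
  set (F := fun x => bump' h x ^ 2 + m * abs_pow2 g x * bump h x ^ 2).
  set (G := fun x => bump h x ^ 2).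
  assert (HF : forall x, continuity_pt F x).
  { intro x. apply continuity_pt_plus; [apply continuity_pt_pow2, continuity_pt_bump' |].
    apply continuity_pt_mult; [| apply continuity_pt_pow2, continuity_pt_bump].
    apply continuity_pt_mult; [apply continuity_pt_const; intros ? ?; reflexivity |].
    apply continuity_pt_abs_pow2, Hg. }
  assert (HG : forall x, continuity_pt G x)
    by (intro x; apply continuity_pt_pow2, continuity_pt_bump).
  assert (p1 : Riemann_integrable F (-1) 1) by (apply continuity_implies_RiemannInt; [lra | auto]).
  assert (p2 : Riemann_integrable G (-1) 1) by (apply continuity_implies_RiemannInt; [lra | auto]).
  exists (RiemannInt p1 / RiemannInt p2). split.
  { exists (bump h), (bump' h). split; [apply admissible_bump, Hh | exists p1, p2; reflexivity]. }
  assert (Hex : forall (f : R -> R), (forall x, continuity_pt f x) -> forall a b, ex_RInt f a b)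
    by (intros f Hf a b; apply (ex_RInt_continuous (V := R_CompleteNormedModule));
        intros; apply continuity_pt_filterlim, Hf).
  rewrite <- !RInt_Reals, (RInt_supported F h), (RInt_supported G h); auto;
    [| intros x Hx; unfold G, F; destruct (bump_outside h x Hx) as [Hb Hb'];
       rewrite Hb, ?Hb'; ring ..].
  unfold G. rewrite RInt_bump_sq by lra.
  set (B := 16 * h ^ 6 + m * Rpower h (2 * g) * h ^ 8).
  assert (HNum : RInt F (- h) h <= (h - - h) * B).
  { eapply Rle_trans; [apply Rle_abs | apply abs_RInt_le_const; [lra | auto |]].
    intros x Hx. unfold F. rewrite Rabs_pos_eq.
    - apply bump_energy_le; [auto | lra | lra | nra].
    - apply Rplus_le_le_0_compat; [apply pow2_ge_0 |].
      apply Rmult_le_pos; [| apply pow2_ge_0].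
      apply Rmult_le_pos; [exact Hm | apply abs_pow2_nonneg]. }
  assert (Hh9 : 0 < h ^ 9) by (apply pow_lt; lra).
  apply Rle_div_l; [lra |].
  eapply Rle_trans; [exact HNum |]. unfold B. apply Req_le. field. lra.
Qed.

Lemma rayleigh_set_upper n g :
  (1 <= n)%nat -> 0 < g ->
  exists q, rayleigh_set n g q /\ q <= 315 / 128 * (16 + PI ^ 2) * Rpower (INR n) (2 / (1 + g)).
Proof.
  intros Hn Hg.
  destruct (bump_rayleigh_le n g (length_scale n g) Hg
              (conj (length_scale_pos n g) (length_scale_le_1 n g Hn Hg))) as [q [Hq Hle]].
  exists q. split; [exact Hq |].
  unfold Rdiv at 2 in Hle. rewrite (inv_length_scale_sq n g Hg) in Hle.
  replace ((INR n * PI) ^ 2 * Rpower (length_scale n g) (2 * g))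
    with (PI ^ 2 * (INR n ^ 2 * Rpower (length_scale n g) (2 * g))) in Hle by ring.
  rewrite (length_scale_weight n g Hn Hg) in Hle. lra.
Qed.

Lemma lambda_is_glb n g : (1 <= n)%nat -> 0 < g -> is_glb (rayleigh_set n g) (lambda n g).
Proof.
  intros Hn Hg. unfold lambda. apply epsilon_spec, is_glb_exists.
  - destruct (rayleigh_set_upper n g Hn Hg) as [q [Hq _]]. exists q. exact Hq.
  - eexists. intro q. apply rayleigh_set_lower; assumption.
Qed.

Theorem proposition2p3 :
  (forall g : R, 0 < g <= 1 ->
     exists c : R, 0 < c /\
       forall n : nat, (1 <= n)%nat -> c * Rpower (INR n) (2 / (1 + g)) <= lambda n g) /\
  (forall g : R, 0 < g ->
     exists c : R, 0 < c /\
       forall n : nat, (1 <= n)%nat -> lambda n g <= c * Rpower (INR n) (2 / (1 + g))).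
Proof.
  pose proof PI_RGT_0. assert (0 < PI ^ 2) by (apply pow_lt; lra).
  split.
  - intros g [Hg _]. exists (/ (4 * PI ^ 2)). split; [apply Rinv_0_lt_compat; lra |].
    intros n Hn. apply (proj2 (lambda_is_glb n g Hn Hg)).
    intro q. apply rayleigh_set_lower; assumption.
  - intros g Hg. exists (315 / 128 * (16 + PI ^ 2)). split; [lra |].
    intros n Hn. destruct (rayleigh_set_upper n g Hn Hg) as [q [Hq Hle]].
    apply Rle_trans with q; [apply (proj1 (lambda_is_glb n g Hn Hg)), Hq | exact Hle].
Qed.
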